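(* Let $\pi_0\in(0,1)$ and let $\psi:[0,1]\to\mathbb{R}$ be non-decreasing with $\psi(0)<\psi(1)$. For $\sigma\in(0,0.25]$ define $$\pi_1(1)=\frac{(1+4\sigma)\pi_0}{1+4\sigma\pi_0},\qquad \pi_1(0)=\frac{(1-4\sigma)\pi_0}{1-4\sigma\pi_0},$$ $$\Psi(\sigma,\pi_0)=(0.5+2\sigma\pi_0)\,\psi(\pi_1(1))+(0.5-2\sigma\pi_0)\,\psi(\pi_1(0)),$$ and $\Delta\Phi(\sigma,\pi_0)=2\sigma\pi_0+\Psi(\sigma,\pi_0)-\psi(\pi_0)$. If $\psi$ is linear or convex, then $\Delta\Phi(\sigma,\pi_0)$ is increasing in $\sigma$.
   Context: Interpretation: $\Delta\Phi(\sigma,\pi_0)$ is the gain in the expert's expected payoff (accuracy plus reputation $\psi$ of the posterior belief about his competence) from choosing a complex rule over a simple rule, where the complex rule yields the correct action with probability $0.5+2\sigma$ if the expert is competent and $0.5$ otherwise, the simple rule yields it with probability $0.5$ and reveals nothing, $\pi_0$ is the prior that the expert is competent, and $\pi_1(Y)$ is the posterior after the complex rule leads to the correct ($Y=1$) or incorrect ($Y=0$) action. *)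

From HB Require Import structures.
From mathcomp Require Import all_boot all_order all_algebra.
Set Implicit Arguments. Unset Strict Implicit. Unset Printing Implicit Defensive.
Import Order.TTheory GRing.Theory Num.Theory.
Local Open Scope ring_scope.

(* psi : [0,1] -> R is represented by a total function R -> R whose
   hypotheses are only imposed on [0,1]. *)

Definition nondecreasing01 {R : realFieldType} (psi : R -> R) : Prop :=
  forall x y : R, 0 <= x -> x <= y -> y <= 1 -> psi x <= psi y.

Definition linear01 {R : realFieldType} (psi : R -> R) : Prop :=
  exists a b : R, forall x : R, 0 <= x <= 1 -> psi x = a + b * x.

Definition convex01 {R : realFieldType} (psi : R -> R) : Prop :=
  forall x y t : R, 0 <= x <= 1 -> 0 <= y <= 1 -> 0 <= t <= 1 ->
    psi ((1 - t) * x + t * y) <= (1 - t) * psi x + t * psi y.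

(* posterior after correct (Y=1) / incorrect (Y=0) action *)
Definition pi1_1 {R : realFieldType} (sigma pi0 : R) : R :=
  (1 + 4 * sigma) * pi0 / (1 + 4 * sigma * pi0).
Definition pi1_0 {R : realFieldType} (sigma pi0 : R) : R :=
  (1 - 4 * sigma) * pi0 / (1 - 4 * sigma * pi0).

Definition Psi {R : realFieldType} (psi : R -> R) (sigma pi0 : R) : R :=
  (2^-1 + 2 * sigma * pi0) * psi (pi1_1 sigma pi0)
  + (2^-1 - 2 * sigma * pi0) * psi (pi1_0 sigma pi0).

Definition DeltaPhi {R : realFieldType} (psi : R -> R) (sigma pi0 : R) : R :=
  2 * sigma * pi0 + Psi psi sigma pi0 - psi pi0.

(* The prior pi0 is the mean of the posterior, which equals pi1(1) or pi1(0)
   with probabilities 1/2 + 2 sigma pi0 and 1/2 - 2 sigma pi0.  As sigma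
   grows, both posteriors move away from pi0, so the posterior distribution
   for a larger sigma is a mean-preserving spread of the one for a smaller
   sigma.  Hence for convex (in particular linear) psi the expected
   reputation Psi is nondecreasing in sigma, while the accuracy gain
   2 sigma pi0 is strictly increasing. *)

From HB Require Import structures.
From mathcomp Require Import all_boot all_order all_algebra.
From mathcomp Require Import ring lra.
Set Implicit Arguments.
Unset Strict Implicit.
Unset Printing Implicit Defensive.
Import Order.TTheory GRing.Theory Num.Theory.
Local Open Scope ring_scope.

Section ConvexOnUnitInterval.

Variables (R : realFieldType) (psi : R -> R).
Hypothesis psi_convex : convex01 psi.

Lemma convex01_chord (a b z : R) :
  0 <= a -> a <= z <= b -> b <= 1 -> a < b ->
  (b - a) * psi z <= (b - z) * psi a + (z - a) * psi b.
Proof.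
move=> a_ge0 /andP[az zb] b_le1 ab.
have ba_gt0 : 0 < b - a by rewrite subr_gt0.
have ba_neq0 : b - a != 0 by rewrite gt_eqF.
set t := (z - a) / (b - a).
have t_ge0 : 0 <= t by apply: divr_ge0; lra.
have t_le1 : t <= 1 by rewrite ler_pdivrMr //; lra.
have z_eq : (1 - t) * a + t * b = z by rewrite /t; field.
have a_in : 0 <= a <= 1 by apply/andP; split; lra.
have b_in : 0 <= b <= 1 by apply/andP; split; lra.
have t_in : 0 <= t <= 1 by apply/andP; split.
have := psi_convex a_in b_in t_in; rewrite z_eq => convex_z.
have -> : (b - z) * psi a + (z - a) * psi b =
          (b - a) * ((1 - t) * psi a + t * psi b) by rewrite /t; field.
by rewrite ler_pM2l.
Qed.

Lemma convex01_mean_preserving_spread (x y lo hi wx wy wlo whi : R) :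
  0 <= lo -> hi <= 1 -> lo < hi ->
  lo <= x <= hi -> lo <= y <= hi -> 0 <= wx -> 0 <= wy ->
  wx + wy = wlo + whi -> wx * x + wy * y = wlo * lo + whi * hi ->
  wx * psi x + wy * psi y <= wlo * psi lo + whi * psi hi.
Proof.
move=> lo_ge0 hi_le1 lo_hi x_in y_in wx_ge0 wy_ge0 mass mean.
rewrite -(ler_pM2l (_ : 0 < hi - lo)) ?subr_gt0 //.
have chord_x := ler_wpM2l wx_ge0 (convex01_chord lo_ge0 x_in hi_le1 lo_hi).
have chord_y := ler_wpM2l wy_ge0 (convex01_chord lo_ge0 y_in hi_le1 lo_hi).
apply: le_trans (_ : _ <= psi lo * (hi * (wx + wy) - (wx * x + wy * y))
                         + psi hi * (wx * x + wy * y - lo * (wx + wy))) _.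
  lra.
by rewrite mass mean; lra.
Qed.

End ConvexOnUnitInterval.

Lemma convex01_linear01 (R : realFieldType) (psi : R -> R) :
  linear01 psi -> convex01 psi.
Proof.
move=> [a [b psi_eq]] x y t /andP[x0 x1] /andP[y0 y1] /andP[t0 t1].
have z_in : 0 <= (1 - t) * x + t * y <= 1 by apply/andP; split; nra.
by rewrite !psi_eq ?x0 ?x1 ?y0 ?y1 //; lra.
Qed.

Section Posteriors.

Variable R : realFieldType.
Implicit Types p s : R.

Lemma pi1_1_0 p : pi1_1 0 p = p.
Proof. by rewrite /pi1_1 !(mulr0, mul0r, addr0) mul1r divr1. Qed.

Lemma pi1_0_0 p : pi1_0 0 p = p.
Proof. by rewrite /pi1_0 !(mulr0, mul0r, subr0) mul1r divr1. Qed.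

Lemma pi1_1_den_gt0 p s : 0 <= p -> 0 <= s -> 0 < 1 + 4 * s * p.
Proof. by move=> p_ge0 s_ge0; have := mulr_ge0 s_ge0 p_ge0; lra. Qed.

Lemma pi1_0_den_gt0 p s : 0 <= p < 1 -> s <= 4^-1 -> 0 < 1 - 4 * s * p.
Proof.
move=> /andP[p_ge0 p_lt1] s_le.
have : 0 <= (1 - 4 * s) * p by apply: mulr_ge0 => //; lra.
lra.
Qed.

Lemma pi1_1_le1 p s : 0 <= p <= 1 -> 0 <= s -> pi1_1 s p <= 1.
Proof.
move=> /andP[p_ge0 p_le1] s_ge0.
by rewrite /pi1_1 ler_pdivrMr ?pi1_1_den_gt0 // mul1r; lra.
Qed.

Lemma pi1_0_ge0 p s : 0 <= p < 1 -> s <= 4^-1 -> 0 <= pi1_0 s p.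
Proof.
move=> p_in s_le; have := pi1_0_den_gt0 p_in s_le.
case/andP: p_in => p_ge0 _ den_gt0.
by rewrite /pi1_0 divr_ge0 ?(ltW den_gt0) //; apply: mulr_ge0 => //; lra.
Qed.

Lemma pi1_1_lt p s1 s2 :
  0 < p < 1 -> 0 <= s1 -> s1 < s2 -> pi1_1 s1 p < pi1_1 s2 p.
Proof.
move=> /andP[p_gt0 p_lt1] s1_ge0 s12.
have d1 := pi1_1_den_gt0 (ltW p_gt0) s1_ge0.
have d2 : 0 < 1 + 4 * s2 * p by apply: pi1_1_den_gt0; lra.
rewrite -subr_gt0.
have -> : pi1_1 s2 p - pi1_1 s1 p =
    4 * p * (1 - p) * (s2 - s1) / ((1 + 4 * s1 * p) * (1 + 4 * s2 * p)).
  by rewrite /pi1_1; field; rewrite !gt_eqF.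
by rewrite divr_gt0 ?mulr_gt0 // subr_gt0.
Qed.

Lemma pi1_0_lt p s1 s2 :
  0 < p < 1 -> s1 < s2 -> s2 <= 4^-1 -> pi1_0 s2 p < pi1_0 s1 p.
Proof.
move=> /andP[p_gt0 p_lt1] s12 s2_le.
have p_in : 0 <= p < 1 by rewrite ltW.
have d2 := pi1_0_den_gt0 p_in s2_le.
have d1 : 0 < 1 - 4 * s1 * p by apply: pi1_0_den_gt0 => //; lra.
rewrite -subr_gt0.
have -> : pi1_0 s1 p - pi1_0 s2 p =
    4 * p * (1 - p) * (s2 - s1) / ((1 - 4 * s1 * p) * (1 - 4 * s2 * p)).
  by rewrite /pi1_0; field; rewrite !gt_eqF.
by rewrite divr_gt0 ?mulr_gt0 // subr_gt0.
Qed.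

Lemma pi1_1_le p s1 s2 :
  0 < p < 1 -> 0 <= s1 -> s1 <= s2 -> pi1_1 s1 p <= pi1_1 s2 p.
Proof.
move=> p_in s1_ge0; rewrite le_eqVlt => /orP[/eqP -> // | s12].
exact/ltW/pi1_1_lt.
Qed.

Lemma pi1_0_le p s1 s2 :
  0 < p < 1 -> s1 <= s2 -> s2 <= 4^-1 -> pi1_0 s2 p <= pi1_0 s1 p.
Proof.
move=> p_in; rewrite le_eqVlt => /orP[/eqP -> // | s12] s2_le.
exact/ltW/pi1_0_lt.
Qed.

Lemma posterior_mean p s : 0 <= p < 1 -> 0 <= s <= 4^-1 ->
  (2^-1 + 2 * s * p) * pi1_1 s p + (2^-1 - 2 * s * p) * pi1_0 s p = p.
Proof.
move=> p_in /andP[s_ge0 s_le].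
have d1 : 0 < 1 + 4 * s * p by case/andP: p_in => p_ge0 _; exact: pi1_1_den_gt0.
have d0 := pi1_0_den_gt0 p_in s_le.
by rewrite /pi1_1 /pi1_0; field; rewrite !gt_eqF.
Qed.

End Posteriors.

Lemma Psi_le (R : realFieldType) (psi : R -> R) (p s1 s2 : R) :
  convex01 psi -> 0 < p < 1 -> 0 <= s1 -> s1 < s2 -> s2 <= 4^-1 ->
  Psi psi s1 p <= Psi psi s2 p.
Proof.
move=> psi_convex p_in s1_ge0 s12 s2_le.
have /andP[p_gt0 p_lt1] := p_in.
have p_ge0_lt1 : 0 <= p < 1 by rewrite ltW.
have lo_lt_p : pi1_0 s2 p < p.
  by rewrite -[X in _ < X](pi1_0_0 p); apply: pi1_0_lt => //; lra.
have p_lt_hi : p < pi1_1 s2 p.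
  by rewrite -[X in X < _](pi1_1_0 p); apply: pi1_1_lt => //; lra.
have lo_y : pi1_0 s2 p <= pi1_0 s1 p by apply: pi1_0_le => //; exact: ltW.
have x_hi : pi1_1 s1 p <= pi1_1 s2 p by apply: pi1_1_le => //; exact: ltW.
have y_p : pi1_0 s1 p <= p.
  by rewrite -[X in _ <= X](pi1_0_0 p); apply: pi1_0_le => //; lra.
have p_x : p <= pi1_1 s1 p by rewrite -[X in X <= _](pi1_1_0 p); apply: pi1_1_le.
have d1 := pi1_1_den_gt0 (ltW p_gt0) s1_ge0.
have d0 : 0 < 1 - 4 * s1 * p by apply: pi1_0_den_gt0 => //; lra.
rewrite /Psi [X in _ <= X]addrC.
apply: convex01_mean_preserving_spread => //.
- by rewrite pi1_0_ge0.
- by rewrite pi1_1_le1 ?ltW //; lra.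
- lra.
- by rewrite x_hi andbT; lra.
- by rewrite lo_y /=; lra.
- lra.
- lra.
- ring.
- by rewrite [RHS]addrC !posterior_mean //; apply/andP; split=> //; lra.
Qed.

Theorem proposition2 (R : realFieldType) (psi : R -> R) (pi0 : R) :
  0 < pi0 < 1 ->
  nondecreasing01 psi ->
  psi 0 < psi 1 ->
  (linear01 psi \/ convex01 psi) ->
  forall s1 s2 : R, 0 < s1 -> s1 < s2 -> s2 <= 4^-1 ->
    DeltaPhi psi s1 pi0 < DeltaPhi psi s2 pi0.
Proof.
move=> pi0_in _ _ psi_shape s1 s2 s1_gt0 s12 s2_le.
have psi_convex : convex01 psi by case: psi_shape => // /convex01_linear01.
have Psi12 := Psi_le psi_convex pi0_in (ltW s1_gt0) s12 s2_le.
rewrite /DeltaPhi; nra.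
Qed.
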